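(* Let $V$ be a real vector space with a non-degenerate symmetric inner product of arbitrary signature, and let $\nabla R$ be a covariant derivative algebraic curvature tensor on $V$. If $\mathcal{S}_{\nabla R}(x)=0$ for all $x\in V$, then $\nabla R=0$.
   Context: A covariant derivative algebraic curvature tensor is $\nabla R\in\otimes^5V^*$ satisfying $\nabla R(a,b,c,d;e)=-\nabla R(b,a,c,d;e)=\nabla R(c,d,a,b;e)$, $\nabla R(a,b,c,d;e)+\nabla R(a,c,d,b;e)+\nabla R(a,d,b,c;e)=0$, and $\nabla R(a,b,c,d;e)+\nabla R(a,b,d,e;c)+\nabla R(a,b,e,c;d)=0$. The Szab\'o operator is defined by $(\mathcal{S}_{\nabla R}(x)y,w)=\nabla R(y,x,x,w;x)$. *)

From mathcomp Require Import all_boot all_order all_algebra.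
Set Implicit Arguments. Unset Strict Implicit. Unset Printing Implicit Defensive.
Import Order.TTheory GRing.Theory Num.Theory.
Local Open Scope ring_scope.

(* V = 'rV[R]_n (real finite-dim vector space, R : realFieldType, e.g. the reals).
   Inner product (x,y) := x *m G *m y^T with G symmetric and invertible
   (non-degenerate, arbitrary signature). *)
Definition ip (R : realFieldType) (n : nat) (G : 'M[R]_n) (x y : 'rV[R]_n) : R :=
  (x *m G *m y^T) 0 0.

(* An element of (V^* )^{(x)5}, given by its components in the standard basis. *)
Definition tensor5 (R : realFieldType) (n : nat) :=
  'I_n -> 'I_n -> 'I_n -> 'I_n -> 'I_n -> R.

Definition ev5 (R : realFieldType) (n : nat) (T : tensor5 R n)
  (a b c d e : 'rV[R]_n) : R :=
  \sum_i \sum_j \sum_k \sum_l \sum_m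
     a 0 i * b 0 j * c 0 k * d 0 l * e 0 m * T i j k l m.

Definition is_cov_deriv_act (R : realFieldType) (n : nat) (T : tensor5 R n) : Prop :=
  forall a b c d e : 'rV[R]_n,
    [/\ ev5 T a b c d e = - ev5 T b a c d e,
        ev5 T a b c d e = ev5 T c d a b e,
        ev5 T a b c d e + ev5 T a c d b e + ev5 T a d b c e = 0
      & ev5 T a b c d e + ev5 T a b d e c + ev5 T a b e c d = 0].

(* Szabo operator S(x) as a matrix acting on row vectors (y |-> y *m S(x)),
   characterized by (S(x)y, w) = T(y,x,x,w;x):
   S(x) = M(x) G^{-1} with M(x)_{ij} = T(e_i,x,x,e_j;x). *)
Definition szabo (R : realFieldType) (n : nat) (G : 'M[R]_n) (T : tensor5 R n)
  (x : 'rV[R]_n) : 'M[R]_n :=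
  (\matrix_(i, j) ev5 T (delta_mx 0 i) x x (delta_mx 0 j) x) *m invmx G.

From mathcomp Require Import all_boot all_order all_algebra.
From mathcomp Require Import ring lra.
From Stdlib Require Import FunctionalExtensionality.
Set Implicit Arguments. Unset Strict Implicit. Unset Printing Implicit Defensive.
Import Order.TTheory GRing.Theory Num.Theory.
Local Open Scope ring_scope.

(* Fix x and put j(y,w;z) = ∇R(y,x,x,w;z), which is symmetric in y and w by the
   pair symmetry.  Polarizing the Szabó cubic ∇R(y,x,x,w;x) = 0 once in x and
   rewriting the two new terms with the second Bianchi identity gives
   3 j(y,w;z) = j(y,z;w) + j(w,z;y).  The three instances of this relation
   obtained by permuting y, w, z form a nonsingular linear system, so j = 0.
   Hence every ∇_z R is an algebraic curvature tensor with vanishing Jacobi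
   operator, and such a tensor is zero because 3 R(x,y,z,w) is a difference of
   two values of its polarized Jacobi form. *)

Section AlgebraicCurvatureTensor.

Variables (K : realFieldType) (V : zmodType) (Rm : V -> V -> V -> V -> K).
Hypotheses (Rm_antisym : forall a b c d, Rm a b c d = - Rm b a c d)
  (Rm_pair : forall a b c d, Rm a b c d = Rm c d a b)
  (Rm_bianchi : forall a b c d, Rm a b c d + Rm a c d b + Rm a d b c = 0)
  (Rm_add2 : forall a b b' c d, Rm a (b + b') c d = Rm a b c d + Rm a b' c d)
  (Rm_add3 : forall a b c c' d, Rm a b (c + c') d = Rm a b c d + Rm a b c' d).

Lemma curvature_sym_jacobi x y z w :
  3 * Rm x y z w = (Rm x y z w + Rm x z y w) - (Rm y x z w + Rm y z x w).
Proof.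
have := Rm_bianchi x y z w.
rewrite (Rm_antisym y x) (Rm_pair y z) (Rm_pair x z y w).
rewrite (Rm_antisym y w x z) (Rm_pair w y x z).
lra.
Qed.

Lemma curvature_eq0_of_jacobi_eq0 :
  (forall y x w, Rm y x x w = 0) -> forall a b c d, Rm a b c d = 0.
Proof.
move=> jacobi0.
have sym_jacobi0 y a b w : Rm y a b w + Rm y b a w = 0.
  by have := jacobi0 y (a + b) w; rewrite Rm_add2 !Rm_add3 !jacobi0; lra.
move=> a b c d; have := curvature_sym_jacobi a b c d.
by rewrite !sym_jacobi0; lra.
Qed.

End AlgebraicCurvatureTensor.

Section CovariantDerivativeCurvatureTensor.

Variables (K : realFieldType) (V : zmodType) (E : V -> V -> V -> V -> V -> K).
Hypotheses (E_antisym : forall a b c d e, E a b c d e = - E b a c d e)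
  (E_pair : forall a b c d e, E a b c d e = E c d a b e)
  (E_bianchi1 : forall a b c d e, E a b c d e + E a c d b e + E a d b c e = 0)
  (E_bianchi2 : forall a b c d e, E a b c d e + E a b d e c + E a b e c d = 0)
  (E_add2 : forall a b b' c d e, E a (b + b') c d e = E a b c d e + E a b' c d e)
  (E_add3 : forall a b c c' d e, E a b (c + c') d e = E a b c d e + E a b c' d e)
  (E_add5 : forall a b c d e e', E a b c d (e + e') = E a b c d e + E a b c d e').

Lemma cov_antisym34 a b c d e : E a b c d e = - E a b d c e.
Proof. by rewrite E_pair E_antisym E_pair. Qed.

Lemma cov_jacobi_sym y x w z : E y x x w z = E w x x y z.
Proof. by rewrite E_pair E_antisym cov_antisym34 opprK. Qed.

Hypothesis szabo0 : forall y x w, E y x x w x = 0.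

(* The values at x + z and x + z + z separate the parts of degree one and two in z. *)
Lemma szabo_polarized y x z w : E y x x w z + E y x z w x + E y z x w x = 0.
Proof.
have := szabo0 y (x + z) w; have := szabo0 y (x + z + z) w.
rewrite !(E_add2, E_add3, E_add5) !szabo0.
lra.
Qed.

Lemma cov_jacobi_relation y x w z : 3 * E y x x w z = E y x x z w + E w x x z y.
Proof.
have := szabo_polarized y x z w.
have := E_bianchi2 y x z w x; rewrite (cov_antisym34 y x w x).
have := E_bianchi2 w x z y x; rewrite (cov_antisym34 w x y x).
rewrite (E_pair y z) (E_antisym x w) (cov_antisym34 w x y) opprK (cov_jacobi_sym w).
lra.
Qed.

Lemma cov_jacobi_eq0 y x w z : E y x x w z = 0.
Proof.
have := cov_jacobi_relation y x w z; have := cov_jacobi_relation y x z w.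
have := cov_jacobi_relation w x z y.
rewrite (cov_jacobi_sym z x w) (cov_jacobi_sym w x y) (cov_jacobi_sym z x y).
lra.
Qed.

Lemma cov_curvature_eq0_of_szabo_eq0 a b c d e : E a b c d e = 0.
Proof.
apply: (curvature_eq0_of_jacobi_eq0 (Rm := fun a b c d => E a b c d e)) => *.
- exact: E_antisym.
- exact: E_pair.
- exact: E_bianchi1.
- exact: E_add2.
- exact: E_add3.
- exact: cov_jacobi_eq0.
Qed.

End CovariantDerivativeCurvatureTensor.

Section Ev5.

Variables (R : realFieldType) (n : nat) (T : tensor5 R n).

Lemma ev5D2 a b b' c d e :
  ev5 T a (b + b') c d e = ev5 T a b c d e + ev5 T a b' c d e.
Proof.
rewrite /ev5 -big_split; do 4!(apply: eq_bigr => ? _; rewrite -big_split).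
by apply: eq_bigr => ? _; rewrite mxE mulrDr !mulrDl.
Qed.

Lemma ev5D3 a b c c' d e :
  ev5 T a b (c + c') d e = ev5 T a b c d e + ev5 T a b c' d e.
Proof.
rewrite /ev5 -big_split; do 4!(apply: eq_bigr => ? _; rewrite -big_split).
by apply: eq_bigr => ? _; rewrite mxE mulrDr !mulrDl.
Qed.

Lemma ev5D5 a b c d e e' :
  ev5 T a b c d (e + e') = ev5 T a b c d e + ev5 T a b c d e'.
Proof.
rewrite /ev5 -big_split; do 4!(apply: eq_bigr => ? _; rewrite -big_split).
by apply: eq_bigr => ? _; rewrite mxE mulrDr !mulrDl.
Qed.

Lemma sum_delta_row (F : 'I_n -> R) i0 :
  \sum_i (delta_mx 0 i0 : 'rV[R]_n) 0 i * F i = F i0.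
Proof.
rewrite (bigD1 i0) //= mxE !eqxx mul1r big1 ?addr0 // => i /negbTE i_neq.
by rewrite mxE i_neq andbF mul0r.
Qed.

Lemma ev5_nested a b c d e :
  ev5 T a b c d e = \sum_i a 0 i * \sum_j b 0 j * \sum_k c 0 k * \sum_l d 0 l *
     \sum_m e 0 m * T i j k l m.
Proof.
rewrite /ev5; apply: eq_bigr => i _; rewrite mulr_sumr; apply: eq_bigr => j _.
rewrite !mulr_sumr; apply: eq_bigr => k _; rewrite !mulr_sumr; apply: eq_bigr => l _.
by rewrite !mulr_sumr; apply: eq_bigr => m _; rewrite !mulrA.
Qed.

Lemma ev5_delta i j k l m : ev5 T 'e_i 'e_j 'e_k 'e_l 'e_m = T i j k l m.
Proof. by rewrite ev5_nested !sum_delta_row. Qed.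

Lemma ev5_delta14 i l b c e :
  ev5 T 'e_i b c 'e_l e = \sum_j \sum_k \sum_m b 0 j * c 0 k * e 0 m * T i j k l m.
Proof.
rewrite ev5_nested sum_delta_row; apply: eq_bigr => j _; rewrite mulr_sumr.
apply: eq_bigr => k _; rewrite sum_delta_row !mulr_sumr.
by apply: eq_bigr => m _; rewrite !mulrA.
Qed.

Lemma ev5_bilinear14 y b c w e :
  ev5 T y b c w e = (y *m (\matrix_(i, l) ev5 T 'e_i b c 'e_l e) *m w^T) 0 0.
Proof.
rewrite mxE; under eq_bigr => l _ do rewrite !mxE big_distrl /=.
rewrite exchange_big {1}/ev5; apply: eq_bigr => i _ /=.
under eq_bigr => j _ do rewrite exchange_big.
rewrite exchange_big; apply: eq_bigr => l _ /=.
rewrite !mxE ev5_delta14 mulr_sumr big_distrl; apply: eq_bigr => j _.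
rewrite mulr_sumr big_distrl; apply: eq_bigr => k _.
rewrite mulr_sumr big_distrl; apply: eq_bigr => m _ /=.
ring.
Qed.

End Ev5.

Theorem lemma3p2 (R : realFieldType) (n : nat) (G : 'M[R]_n) (T : tensor5 R n) :
  G^T = G -> G \in unitmx ->
  is_cov_deriv_act T ->
  (forall x : 'rV[R]_n, szabo G T x = 0) ->
  T = (fun _ _ _ _ _ => 0).
Proof.
(* Only the invertibility of G matters: it turns szabo G T x = 0 into the
   vanishing of the form (y, w) |-> ∇R(y,x,x,w;x). *)
move=> _ G_unit T_act szabo_T.
have szabo_form y x w : ev5 T y x x w x = 0.
  have := congr1 (mulmx^~ G) (szabo_T x).
  rewrite /szabo -mulmxA mulVmx // mulmx1 mul0mx => jacobi_mx0.
  by rewrite ev5_bilinear14 jacobi_mx0 mulmx0 mul0mx mxE.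
have ev5_T0 a b c d e : ev5 T a b c d e = 0.
  apply: (cov_curvature_eq0_of_szabo_eq0 _ _ _ _
           (ev5D2 T) (ev5D3 T) (ev5D5 T) szabo_form);
    by move=> {}a {}b {}c {}d {}e; case: (T_act a b c d e).
do 5!apply: functional_extensionality_dep => ?.
by rewrite -ev5_delta ev5_T0.
Qed.
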